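(* Let $V$ be an $n$-dimensional vector space over $\mathbb{F}_q$ with $n\ge 4$, let $Y$ be a set of transvections in $\mathrm{SL}(V)$ and $H=\langle Y\rangle$. Then $H$ acts irreducibly on $V$ if and only if the following three conditions hold: (1) ${}_VY$ spans $V$; (2) $Y_{V^*}$ spans $V^*$; (3) the transvection graph $\Gamma(Y)$ is strongly connected.
   Context: Every transvection can be written as $1+u\otimes\phi$, i.e. $x\mapsto x+\phi(x)u$, with $0\ne u\in V$, $0\ne\phi\in V^*$, $\phi(u)=0$. ${}_VY=\{v\in V:\exists\phi\in V^*,\ 1+v\otimes\phi\in Y\}$ and $Y_{V^*}=\{\phi\in V^*:\exists v\in V,\ 1+v\otimes\phi\in Y\}$. The transvection graph $\Gamma(Y)$ is the directed graph with vertex set $Y$ and a directed edge from $s=1+u\otimes\phi$ to $t=1+v\otimes\psi$ iff $\psi(u)\ne 0$ (independent of the chosen representations). Strongly connected means there is a directed path between any two distinct vertices in each direction. *)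

From HB Require Import structures.
From mathcomp Require Import all_boot all_order all_algebra all_fingroup.
From mathcomp Require Import mxrepresentation mxabelem.
Set Implicit Arguments. Unset Strict Implicit. Unset Printing Implicit Defensive.
Import GRing.Theory.
Local Open Scope ring_scope.

(* Conventions: V = 'rV[F]_m (row vectors), m = n.-1.+1 = n (n >= 1).
   A matrix g acts on V by x |-> x *m g (as in MathComp representations).
   A linear form phi in V^* is represented by a column vector f : 'cV_m,
   phi(x) = x *m f.  The transvection 1 + u (x) phi, x |-> x + phi(x) u,
   is then the matrix 1%:M + f *m u. *)

Section Transvections.
Variables (F : finFieldType) (m : nat).

Definition tv_rep (t : 'M[F]_m) (u : 'rV[F]_m) (f : 'cV[F]_m) : bool :=
  [&& u != 0, f != 0, u *m f == 0 & t == 1%:M + f *m u].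

Definition is_transvection (t : 'M[F]_m) : Prop :=
  exists u f, tv_rep t u f.

Definition VY (Y : {set 'M[F]_m}) : {set 'rV[F]_m} :=
  [set u | [exists t in Y, exists f, tv_rep t u f]].

Definition YVs (Y : {set 'M[F]_m}) : {set 'cV[F]_m} :=
  [set f | [exists t in Y, exists u, tv_rep t u f]].

Definition spansV (S : {set 'rV[F]_m}) : bool :=
  row_full (\sum_(u in S) <<u>>)%MS.

Definition spansVs (S : {set 'cV[F]_m}) : bool :=
  row_full (\sum_(f in S) <<f^T>>)%MS.

Definition tv_edge (s t : 'M[F]_m) : bool :=
  [exists u, exists f, exists v, exists g,
     [&& tv_rep s u f, tv_rep t v g & u *m g != 0]].

Definition tgraph (Y : {set 'M[F]_m}) : rel 'M[F]_m :=
  [rel s t | [&& s \in Y, t \in Y & tv_edge s t]].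

Definition strongly_connected (Y : {set 'M[F]_m}) : Prop :=
  forall s t, s \in Y -> t \in Y -> s != t -> connect (tgraph Y) s t.

End Transvections.

Definition natrep (F : finFieldType) (n : nat) (H : {group {'GL_n[F]}}) :
  mx_representation F H n.-1.+1 :=
  subg_repr (GLrepr F n.-1) (subsetT H).

Definition mxset (F : finFieldType) (n : nat) (Y : {set {'GL_n[F]}}) :
  {set 'M[F]_n.-1.+1} := [set GLval y | y in Y].

From HB Require Import structures.
From mathcomp Require Import all_boot all_order all_algebra all_fingroup.
From mathcomp Require Import mxrepresentation mxabelem.
Set Implicit Arguments. Unset Strict Implicit. Unset Printing Implicit Defensive.
Import GRing.Theory.

(* Write a transvection as t = 1 + a_t, where a_t = t - 1 has rank one, with
   row space spanned by u_t and kernel ker phi_t.  Since W t = W + W a_t, a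
   subspace W is t-invariant iff W a_t = 0 or u_t lies in W; and the edge
   condition psi_t(u_s) <> 0 says exactly that a_s a_t <> 0.  Hence a space
   containing all the u_t, a space killed by all the phi_t, and the span of the
   u_x over the vertices x reachable from a fixed vertex are all invariant;
   irreducibility forces them to be V, 0 and V, which gives (1)-(3).
   Conversely, by (2) a nonzero invariant W is not killed by some phi_t, so it
   contains u_t; invariance propagates this along the edges of Gamma(Y), so by
   (3) W contains every u_t, and W = V by (1). *)

Section RankOne.
Variable F : fieldType.
Local Open Scope ring_scope.

Lemma row_full_col_neq0 k (c : 'M[F]_(k, 1)) : row_full c = (c != 0).
Proof. by rewrite /row_full -mxrank_eq0 eqn_leq rank_leq_col lt0n. Qed.

Lemma row_full_mul_eq0 k n p (A : 'M[F]_(k, n)) (B : 'M[F]_(n, p)) :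
  row_full A -> (A *m B == 0) = (B == 0).
Proof. by move=> fullA; apply: eqmx_eq0 (eqmxMfull B fullA). Qed.

Lemma mul_col_eqmx k p (c : 'M[F]_(k, 1)) (r : 'M[F]_(1, p)) :
  c != 0 -> (c *m r :=: r)%MS.
Proof. by rewrite -row_full_col_neq0; apply: eqmxMfull. Qed.

Lemma mul_col_eq0 k p (c : 'M[F]_(k, 1)) (r : 'M[F]_(1, p)) :
  (c *m r == 0) = (c == 0) || (r == 0).
Proof.
have [-> | nz_c] := eqVneq c 0; first by rewrite mul0mx eqxx.
by rewrite row_full_mul_eq0 // row_full_col_neq0.
Qed.

Lemma addmx_sub_self k n (A B : 'M[F]_(k, n)) :
  ((A + B)%R <= A)%MS = (B <= A)%MS.
Proof.
apply/idP/idP=> sBA; last exact: addmx_sub (submx_refl A) sBA.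
by rewrite -(addKr A B); apply: addmx_sub; rewrite ?eqmx_opp.
Qed.

Lemma sumsmx_mul_eq0 (I : finType) (P : pred I) k n p
    (A_ : I -> 'M[F]_(k, n)) (B : 'M[F]_(n, p)) :
  (forall i, P i -> A_ i *m B = 0) -> (\sum_(i | P i) <<A_ i>>)%MS *m B = 0.
Proof.
move=> A_B0; apply/sub_kermxP/sumsmx_subP => i Pi.
by rewrite genmxE; apply/sub_kermxP/A_B0.
Qed.

End RankOne.

Section Transvection.
Variables (F : finFieldType) (m : nat).
Implicit Types (s t : 'M[F]_m) (u v : 'rV[F]_m) (f g : 'cV[F]_m).
Local Open Scope ring_scope.

Lemma tv_rep_subr1 t u f : tv_rep t u f -> t - 1%:M = f *m u.
Proof. by case/and4P=> _ _ _ /eqP ->; rewrite addrC addKr. Qed.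

Lemma tv_rep_eqmx t u f : tv_rep t u f -> (t - 1%:M :=: u)%MS.
Proof.
by move=> tuf; rewrite (tv_rep_subr1 tuf); case/and4P: tuf => _ nz_f _ _;
  apply: mul_col_eqmx.
Qed.

Lemma tv_subr1_neq0 t : is_transvection t -> t - 1%:M != 0.
Proof.
by case=> u [f tuf]; rewrite (eqmx_eq0 (tv_rep_eqmx tuf)); case/and4P: tuf.
Qed.

Lemma tv_rep_mul_eq0 k (W : 'M[F]_(k, m)) t u f :
  tv_rep t u f -> (W *m (t - 1%:M) == 0) = (W *m f == 0).
Proof.
move=> tuf; rewrite (tv_rep_subr1 tuf) mulmxA mul_col_eq0.
by case/and4P: tuf => /negbTE -> _ _ _; rewrite orbF.
Qed.

Lemma stablemx_tv k (W : 'M[F]_(k, m)) t : is_transvection t ->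
  stablemx W t = (W *m (t - 1%:M) == 0) || (t - 1%:M <= W)%MS.
Proof.
case=> u [f tuf]; rewrite (tv_rep_mul_eq0 _ tuf) (tv_rep_eqmx tuf).
have -> : W *m t = W + W *m f *m u.
  by rewrite -mulmxA -(tv_rep_subr1 tuf) mulmxBr mulmx1 addrC subrK.
have [-> | nz_Wf] := eqVneq (W *m f) 0.
  by rewrite mul0mx addr0 submx_refl.
by rewrite addmx_sub_self (mul_col_eqmx u nz_Wf).
Qed.

Lemma tv_rep_mul_subr1_eq0 s t u f v g : tv_rep s u f -> tv_rep t v g ->
  ((s - 1%:M) *m (t - 1%:M) == 0) = (u *m g == 0).
Proof.
move=> suf tvg; rewrite (tv_rep_mul_eq0 _ tvg) (tv_rep_subr1 suf) -mulmxA.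
by rewrite mul_col_eq0; case/and4P: suf => _ /negbTE -> _ _.
Qed.

Lemma tv_edgeE s t : is_transvection s -> is_transvection t ->
  tv_edge s t = ((s - 1%:M) *m (t - 1%:M) != 0).
Proof.
case=> u [f suf] [v [g tvg]]; apply/idP/idP.
  case/existsP=> u' /existsP[f' /existsP[v' /existsP[g' /and3P[suf' tvg']]]].
  by rewrite (tv_rep_mul_subr1_eq0 suf' tvg').
rewrite (tv_rep_mul_subr1_eq0 suf tvg) => nz_ug.
apply/existsP; exists u; apply/existsP; exists f; apply/existsP; exists v.
by apply/existsP; exists g; rewrite suf tvg.
Qed.

End Transvection.

Definition irreducible_mxset (F : finFieldType) m (T : {set 'M[F]_m}) :=
  forall W : 'M[F]_m, {in T, forall t, stablemx W t} -> W != 0%R -> row_full W.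

Section TransvectionSet.
Variables (F : finFieldType) (m : nat) (T : {set 'M[F]_m}).
Hypothesis tvT : {in T, forall t, is_transvection t}.
Local Open Scope ring_scope.

Lemma spansV_VYP :
  spansV (VY T) <->
  (forall W : 'M[F]_m, {in T, forall t, (t - 1%:M <= W)%MS} -> row_full W).
Proof.
rewrite /spansV; set S := (\sum_(u in VY T) <<u>>)%MS.
split=> [fullS W sTW | fullT].
  rewrite -sub1mx (submx_trans _ (_ : S <= W)%MS) ?sub1mx //.
  apply/sumsmx_subP=> u; rewrite inE => /exists_inP[t tT /existsP[f tuf]].
  by rewrite genmxE -(tv_rep_eqmx tuf) sTW.
apply: fullT => t tT; have [u [f tuf]] := tvT tT.
rewrite (tv_rep_eqmx tuf) (sumsmx_sup u) ?genmxE //.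
by rewrite inE; apply/exists_inP; exists t => //; apply/existsP; exists f.
Qed.

Lemma spansVs_YVsP :
  spansVs (YVs T) <->
  (forall W : 'M[F]_m, {in T, forall t, W *m (t - 1%:M) = 0} -> W = 0).
Proof.
rewrite /spansVs; set S := (\sum_(f in YVs T) <<f^T>>)%MS.
split=> [fullS W Wa0 | kerT].
  have /eqP : S *m W^T = 0.
    apply: sumsmx_mul_eq0 => f.
    rewrite inE => /exists_inP[t tT /existsP[u tuf]].
    by apply/eqP; rewrite -trmx_mul trmx_eq0 -(tv_rep_mul_eq0 _ tuf) Wa0.
  by rewrite row_full_mul_eq0 // trmx_eq0 => /eqP.
have S_ker : (S <= kermx (kermx S^T)^T)%MS.
  by apply/sub_kermxP/trmx_inj; rewrite trmx_mul trmxK mulmx_ker trmx0.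
suff /eqP : kermx S^T = 0 by rewrite kermx_eq0 /row_free mxrank_tr.
apply: kerT => t tT; have [u [f tuf]] := tvT tT.
apply/eqP; rewrite (tv_rep_mul_eq0 _ tuf) -trmx_eq0 trmx_mul.
apply/eqP/sub_kermxP; apply: submx_trans S_ker.
rewrite (sumsmx_sup f) ?genmxE //.
by rewrite inE; apply/exists_inP; exists t => //; apply/existsP; exists u.
Qed.

Lemma tgraph_stable_sub (W : 'M[F]_m) s t :
  {in T, forall x, stablemx W x} -> tgraph T s t ->
  (s - 1%:M <= W)%MS -> (t - 1%:M <= W)%MS.
Proof.
move=> stW /and3P[sT tT]; rewrite (tv_edgeE (tvT sT) (tvT tT)) => nz_st.
case/submxP=> X def_s.
have := stW t tT; rewrite (stablemx_tv _ (tvT tT)); case/orP=> // /eqP Wt0.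
by move: nz_st; rewrite def_s -mulmxA Wt0 mulmx0 eqxx.
Qed.

Lemma connect_stable_sub (W : 'M[F]_m) s t :
  {in T, forall x, stablemx W x} -> connect (tgraph T) s t ->
  (s - 1%:M <= W)%MS -> (t - 1%:M <= W)%MS.
Proof.
move=> stW /connectP[p]; elim: p s => [s _ -> // | x p IHp s] /=.
case/andP=> sx px t_last sW.
exact: IHp px t_last (tgraph_stable_sub stW sx sW).
Qed.

Lemma irreducible_mxset_nonempty :
  (1 < m)%N -> irreducible_mxset T -> exists t, t \in T.
Proof.
move=> m_gt1 irrT; have [T0 | [t tT]] := set_0Vmem T; last by exists t.
have rank_pid1 : \rank (pid_mx 1 : 'M[F]_m) = 1%N.
  by apply: rank_pid_mx; apply: ltnW.
have full1 : row_full (pid_mx 1 : 'M[F]_m).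
  apply: irrT => [t | ]; first by rewrite T0 inE.
  by rewrite -mxrank_eq0 rank_pid1.
by rewrite /row_full rank_pid1 eq_sym gtn_eqF in full1.
Qed.

Section Irreducible.
Hypotheses (m_gt1 : (1 < m)%N) (irrT : irreducible_mxset T).

Lemma irreducible_spansV : spansV (VY T).
Proof.
have [t0 t0T] := irreducible_mxset_nonempty m_gt1 irrT.
apply/spansV_VYP => W aW.
apply: irrT => [t tT | ]; first by rewrite (stablemx_tv _ (tvT tT)) aW ?orbT.
by apply: contraTneq (aW t0 t0T) => ->; rewrite submx0; apply/tv_subr1_neq0/tvT.
Qed.

Lemma irreducible_spansVs : spansVs (YVs T).
Proof.
have [t0 t0T] := irreducible_mxset_nonempty m_gt1 irrT.
apply/spansVs_YVsP => W Wa0.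
apply/eqP; apply: contraTT (tv_subr1_neq0 (tvT t0T)) => nzW.
have fullW : row_full W.
  by apply: irrT nzW => t tT; rewrite (stablemx_tv _ (tvT tT)) Wa0 ?eqxx.
by rewrite negbK -(row_full_mul_eq0 _ fullW) Wa0.
Qed.

Lemma irreducible_strongly_connected : strongly_connected T.
Proof.
move=> s t sT tT _.
set W := (\sum_(x in T | connect (tgraph T) s x) <<x - 1%:M>>)%MS.
have W_unreached y :
  y \in T -> ~~ connect (tgraph T) s y -> W *m (y - 1%:M) = 0.
  move=> yT s_y; apply: sumsmx_mul_eq0 => x /andP[xT s_x]; apply/eqP.
  apply: contraNT s_y => nz_xy; apply: connect_trans s_x (connect1 _).
  by rewrite /tgraph /= xT yT (tv_edgeE (tvT xT) (tvT yT)).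
have a_W y : y \in T -> connect (tgraph T) s y -> (y - 1%:M <= W)%MS.
  by move=> yT s_y; rewrite (sumsmx_sup y) ?genmxE ?yT.
have fullW : row_full W.
  apply: irrT => [y yT | ].
    rewrite (stablemx_tv _ (tvT yT)).
    by case: (boolP (connect (tgraph T) s y))
      => [/(a_W y yT) | /(W_unreached y yT)] ->; rewrite ?orbT ?eqxx.
  apply: contraTneq (a_W s sT (connect0 _ s)) => ->.
  by rewrite submx0; apply/tv_subr1_neq0/tvT.
apply: contraTT (tv_subr1_neq0 (tvT tT)) => /(W_unreached t tT)/eqP.
by rewrite row_full_mul_eq0 // negbK.
Qed.

End Irreducible.

Lemma conditions_irreducible_mxset :
  spansV (VY T) -> spansVs (YVs T) -> strongly_connected T ->
  irreducible_mxset T.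
Proof.
move=> /spansV_VYP spV /spansVs_YVsP spVs scT W stW nzW; apply: spV.
have [t0 t0T nz_Wt0] : exists2 t0, t0 \in T & W *m (t0 - 1%:M) != 0.
  apply/exists_inP; apply: contraNT nzW => /exists_inPn Wa0.
  by apply/eqP/spVs => t /Wa0 /negPn /eqP.
have a0_W : (t0 - 1%:M <= W)%MS.
  by have := stW t0 t0T; rewrite (stablemx_tv _ (tvT t0T)) (negbTE nz_Wt0).
move=> t tT; have [<- // | t0t] := eqVneq t0 t.
exact: connect_stable_sub stW (scT _ _ t0T tT t0t) a0_W.
Qed.

Theorem irreducible_mxsetP : (1 < m)%N ->
  irreducible_mxset T <->
  [/\ spansV (VY T), spansVs (YVs T) & strongly_connected T].
Proof.
move=> m_gt1; split=> [irrT | [spV spVs scT]].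
  by split; [apply: irreducible_spansV | apply: irreducible_spansVs
            | apply: irreducible_strongly_connected].
exact: conditions_irreducible_mxset spV spVs scT.
Qed.

End TransvectionSet.

Lemma mxmodule_natrep_gen (F : finFieldType) n (Y : {set {'GL_n[F]}}) k
    (W : 'M[F]_(k, n.-1.+1)) :
  mxmodule (natrep <<Y>>%G) W <-> {in mxset Y, forall t, stablemx W t}.
Proof.
split=> [/mxmoduleP stW _ /imsetP[y yY ->] | stW].
  exact: stW (mem_gen yY).
rewrite /mxmodule gen_subG; apply/subsetP=> y yY.
by rewrite inE mem_gen //= stW ?imset_f.
Qed.

Lemma natrep_irreducible (F : finFieldType) n (Y : {set {'GL_n[F]}}) :
  mx_irreducible (natrep <<Y>>%G) <-> irreducible_mxset (mxset Y).
Proof.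
split=> [/mx_irrP[_ irrY] W /mxmodule_natrep_gen | irrY]; first exact: irrY.
by apply/mx_irrP; split=> // W /mxmodule_natrep_gen; apply: irrY.
Qed.

Theorem theorem3p1 (F : finFieldType) (n : nat) (Y : {set {'GL_n[F]}}) :
  3 < n ->
  (forall y, y \in Y -> is_transvection (GLval y)) ->
  mx_irreducible (natrep <<Y>>%G)
  <-> [/\ spansV (VY (mxset Y)), spansVs (YVs (mxset Y))
        & strongly_connected (mxset Y)].
Proof.
move=> n_gt3 tvY.
have tvT : {in mxset Y, forall t, is_transvection t}.
  by move=> _ /imsetP[y yY ->]; apply: tvY.
have n_gt1 : (1 < n.-1.+1)%N by rewrite prednK ?(leq_trans _ n_gt3).
exact: iff_trans (natrep_irreducible Y) (irreducible_mxsetP tvT n_gt1).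
Qed.
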